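(* Let $\mathfrak{n}$ be the real $7$-dimensional Lie algebra with basis $e_1,\dots,e_7$ whose nonzero brackets (up to antisymmetry) are $[e_1,e_2]=e_4$, $[e_1,e_4]=e_5$, $[e_1,e_5]=e_7$, $[e_2,e_3]=e_6+e_7$, $[e_2,e_4]=e_6$. Then $\mathfrak{n}$ is an Einstein nilradical.
   Context: A real nilpotent Lie algebra $\mathfrak{n}$ is called an Einstein nilradical if it admits an inner product such that the left-invariant Riemannian metric it defines on the simply connected nilpotent Lie group with Lie algebra $\mathfrak{n}$ is a nilsoliton, i.e. its Ricci operator satisfies $\mathrm{Ric}=c\,\mathrm{Id}+D$ for some $c\in\mathbb{R}$ and some derivation $D$ of $\mathfrak{n}$. Brackets of basis elements not listed are zero. *)

From HB Require Import structures.
From mathcomp Require Import all_boot all_order all_algebra.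
From mathcomp Require Import reals.
Set Implicit Arguments. Unset Strict Implicit. Unset Printing Implicit Defensive.
Import Order.TTheory GRing.Theory Num.Theory.
Local Open Scope ring_scope.

Section MetricLie.
Variables (R : realType) (n : nat).

(* Vectors of the n-dimensional Lie algebra are row vectors of coordinates
   w.r.t. the fixed basis e_0, ..., e_(n-1). *)
Definition lbr (C : 'I_n -> 'I_n -> 'rV[R]_n) (x y : 'rV[R]_n) : 'rV[R]_n :=
  \sum_(i < n) \sum_(j < n) (x 0 i * y 0 j) *: C i j.

Definition ip (G : 'M[R]_n) (x y : 'rV[R]_n) : R := (x *m G *m y^T) 0 0.

Definition is_inner_product (G : 'M[R]_n) : Prop :=
  G^T = G /\ forall x : 'rV[R]_n, x != 0 -> 0 < ip G x x.

Definition orthonormal_basis (G : 'M[R]_n) (X : 'I_n -> 'rV[R]_n) : Prop :=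
  forall i j, ip G (X i) (X j) = (i == j)%:R.

(* Ricci form of the left-invariant metric on a nilpotent Lie group, computed
   in an orthonormal basis X (standard formula, e.g. Lauret):
   ric(x,y) = -1/2 sum_{i,j} <[x,X_i],X_j><[y,X_i],X_j>
              + 1/4 sum_{i,j} <[X_i,X_j],x><[X_i,X_j],y>. *)
Definition ric_form C G (X : 'I_n -> 'rV[R]_n) (x y : 'rV[R]_n) : R :=
  - (1/2) * \sum_(i < n) \sum_(j < n)
        ip G (lbr C x (X i)) (X j) * ip G (lbr C y (X i)) (X j)
  + (1/4) * \sum_(i < n) \sum_(j < n)
        ip G (lbr C (X i) (X j)) x * ip G (lbr C (X i) (X j)) y.

(* Ricci operator: the G-symmetric operator with <Ric x, y> = ric(x,y). *)
Definition ricci_op C G (X : 'I_n -> 'rV[R]_n) (x : 'rV[R]_n) : 'rV[R]_n :=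
  \sum_(k < n) ric_form C G X x (X k) *: X k.

Definition is_derivation C (D : 'M[R]_n) : Prop :=
  forall x y, lbr C x y *m D = lbr C (x *m D) y + lbr C x (y *m D).

Definition nilsoliton C G : Prop :=
  exists X : 'I_n -> 'rV[R]_n, orthonormal_basis G X /\
  exists (c : R) (D : 'M[R]_n), is_derivation C D /\
    forall x, ricci_op C G X x = c *: x + x *m D.

Definition Einstein_nilradical C : Prop :=
  exists G : 'M[R]_n, is_inner_product G /\ nilsoliton C G.

End MetricLie.

(* The 7-dimensional example; e k is e_(k+1) of the paper (0-indexed). *)
Definition e7 (R : realType) (k : nat) : 'rV[R]_7 := delta_mx 0 (inord k).

Definition C7 (R : realType) (i j : 'I_7) : 'rV[R]_7 :=
  match nat_of_ord i, nat_of_ord j with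
  | 0, 1 => e7 R 3
  | 1, 0 => - e7 R 3
  | 0, 3 => e7 R 4
  | 3, 0 => - e7 R 4
  | 0, 4 => e7 R 6
  | 4, 0 => - e7 R 6
  | 1, 2 => e7 R 5 + e7 R 6
  | 2, 1 => - (e7 R 5 + e7 R 6)
  | 1, 3 => e7 R 5
  | 3, 1 => - e7 R 5
  | _, _ => 0
  end.

(* The nilsoliton metric is diagonal in the adapted basis
   f = (e1, e2, e3 - 2/5 e4, e4, e5, e6 + 3/4 e7, e7), with squared norms
   (3, 9, 3/5, 15/11, 3/11, 13/22, 8/121).  In an orthogonal frame the Ricci form
   is an explicit quadratic expression in the structure constants ([frame_ric]),
   and here it is diagonal: Ric f_i = (c + λ w_i) f_i with c = -89/594,
   λ = 23/594 and w = (1,2,3,3,4,5,5).  The brackets are homogeneous for the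
   grading w (deg [e_i,e_j] = w_i + w_j) and every f_i is homogeneous of degree
   w_i, so D = λ diag(w) is a derivation and Ric = c Id + D. *)

From HB Require Import structures.
From mathcomp Require Import all_boot all_order all_algebra.
From mathcomp Require Import reals.
From mathcomp Require Import ring lra.

Set Implicit Arguments. Unset Strict Implicit. Unset Printing Implicit Defensive.
Import Order.TTheory GRing.Theory Num.Theory.
Local Open Scope ring_scope.

Section BracketAndRicci.
Variables (R : realType) (n : nat).
Implicit Types (C : 'I_n -> 'I_n -> 'rV[R]_n) (G : 'M[R]_n) (x y z : 'rV[R]_n).

Lemma lbrDl C x y z : lbr C (x + y) z = lbr C x z + lbr C y z.
Proof.
rewrite /lbr -big_split; apply: eq_bigr => i _.
rewrite -big_split; apply: eq_bigr => j _.
by rewrite !mxE mulrDl scalerDl.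
Qed.

Lemma lbrDr C x y z : lbr C z (x + y) = lbr C z x + lbr C z y.
Proof.
rewrite /lbr -big_split; apply: eq_bigr => i _.
rewrite -big_split; apply: eq_bigr => j _.
by rewrite !mxE mulrDr scalerDl.
Qed.

Lemma lbrZl C a x z : lbr C (a *: x) z = a *: lbr C x z.
Proof.
rewrite /lbr scaler_sumr; apply: eq_bigr => i _.
rewrite scaler_sumr; apply: eq_bigr => j _.
by rewrite !mxE scalerA mulrA.
Qed.

Lemma lbrZr C a x z : lbr C z (a *: x) = a *: lbr C z x.
Proof.
rewrite /lbr scaler_sumr; apply: eq_bigr => i _.
rewrite scaler_sumr; apply: eq_bigr => j _.
by rewrite !mxE scalerA mulrCA.
Qed.

Lemma lbrNl C x z : lbr C (- x) z = - lbr C x z.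
Proof. by rewrite -scaleN1r lbrZl scaleN1r. Qed.

Lemma lbrNr C x z : lbr C z (- x) = - lbr C z x.
Proof. by rewrite -scaleN1r lbrZr scaleN1r. Qed.

Lemma lbr_delta C i j : lbr C (delta_mx 0 i) (delta_mx 0 j) = C i j.
Proof.
rewrite /lbr (bigD1 i) //= [X in _ + X]big1 ?addr0 => [|k ki]; last first.
  by rewrite big1 // => l _; rewrite !mxE (negbTE ki) mul0r scale0r.
rewrite (bigD1 j) //= [X in _ + X]big1 ?addr0 => [|l lj]; last first.
  by rewrite !mxE (negbTE lj) mulr0 scale0r.
by rewrite !mxE !eqxx mulr1 scale1r.
Qed.

Lemma ipDl G x y z : ip G (x + y) z = ip G x z + ip G y z.
Proof. by rewrite /ip !mulmxDl mxE. Qed.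

Lemma ipDr G x y z : ip G z (x + y) = ip G z x + ip G z y.
Proof. by rewrite /ip linearD mulmxDr mxE. Qed.

Lemma ipZl G a x z : ip G (a *: x) z = a * ip G x z.
Proof. by rewrite /ip -!scalemxAl mxE. Qed.

Lemma ipZr G a x z : ip G z (a *: x) = a * ip G z x.
Proof. by rewrite /ip linearZ -scalemxAr mxE. Qed.

Lemma ipNl G x z : ip G (- x) z = - ip G x z.
Proof. by rewrite -scaleN1r ipZl mulN1r. Qed.

Lemma ipNr G x z : ip G z (- x) = - ip G z x.
Proof. by rewrite -scaleN1r ipZr mulN1r. Qed.

Lemma ip_suml G (F : 'I_n -> 'rV[R]_n) z :
  ip G (\sum_(k < n) F k) z = \sum_(k < n) ip G (F k) z.
Proof.
apply: (big_morph (ip G ^~ z)) => [x y|]; first exact: ipDl.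
by rewrite /ip !mul0mx mxE.
Qed.

Lemma ip_sumr G (F : 'I_n -> 'rV[R]_n) z :
  ip G z (\sum_(k < n) F k) = \sum_(k < n) ip G z (F k).
Proof.
apply: (big_morph (ip G z)) => [x y|]; first exact: ipDr.
by rewrite /ip linear0 mulmx0 mxE.
Qed.

Lemma ip_delta G i j : ip G (delta_mx 0 i) (delta_mx 0 j) = G i j.
Proof. by rewrite /ip -rowE trmx_delta -colE !mxE. Qed.

Lemma ric_formDZl C G X a x y z :
  ric_form C G X (a *: x + y) z = a * ric_form C G X x z + ric_form C G X y z.
Proof.
rewrite /ric_form.
under eq_bigr do under eq_bigr do rewrite lbrDl lbrZl ipDl ipZl mulrDl -mulrA.
under [X in 1/4 * X]eq_bigr do under eq_bigr do
  rewrite ipDr ipZr mulrDl -mulrA.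
under eq_bigr do rewrite big_split -mulr_sumr.
under [X in 1/4 * X]eq_bigr do rewrite big_split -mulr_sumr.
rewrite !big_split -!mulr_sumr /=; ring.
Qed.

Lemma ric_formZr C G X a x y :
  ric_form C G X x (a *: y) = a * ric_form C G X x y.
Proof.
rewrite /ric_form.
under eq_bigr do under eq_bigr do rewrite lbrZl ipZl mulrCA.
under [X in 1/4 * X]eq_bigr do under eq_bigr do rewrite ipZr mulrCA.
under eq_bigr do rewrite -mulr_sumr.
under [X in 1/4 * X]eq_bigr do rewrite -mulr_sumr.
rewrite -!mulr_sumr; ring.
Qed.

Lemma ricci_opDZ C G X a x y :
  ricci_op C G X (a *: x + y) = a *: ricci_op C G X x + ricci_op C G X y.
Proof.
rewrite /ricci_op scaler_sumr -big_split; apply: eq_bigr => k _.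
by rewrite ric_formDZl scalerDl scalerA.
Qed.

Lemma ricci_op0 C G X : ricci_op C G X 0 = 0.
Proof.
have := ricci_opDZ C G X 1 0 0; rewrite !scale1r addr0.
by move/esym/(canRL (addrK _)); rewrite subrr.
Qed.

Lemma diag_derivation C (d : 'I_n -> R) :
  (forall i j, C i j *m diag_mx (\row_k d k) = (d i + d j) *: C i j) ->
  is_derivation C (diag_mx (\row_k d k)).
Proof.
move=> Cd x y; rewrite /lbr mulmx_suml -big_split; apply: eq_bigr => i _.
rewrite mulmx_suml -big_split; apply: eq_bigr => j _.
rewrite /= -scalemxAl Cd scalerA -scalerDl !mul_mx_diag !mxE; congr (_ *: _).
ring.
Qed.

End BracketAndRicci.

Section OrthogonalFrame.
Variables (R : realType) (n : nat) (C : 'I_n -> 'I_n -> 'rV[R]_n) (G : 'M[R]_n).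
Variables (f : 'I_n -> 'rV[R]_n) (g : 'I_n -> R) (beta : 'I_n -> 'I_n -> 'I_n -> R).
Hypothesis ip_frame : forall i j, ip G (f i) (f j) = (i == j)%:R * g i.
Hypothesis frame_norm_gt0 : forall i, 0 < g i.
Hypothesis lbr_frame : forall i j, lbr C (f i) (f j) = \sum_k beta i j k *: f k.

Definition frame_scale i := (Num.sqrt (g i))^-1.
Definition normalized_frame i := frame_scale i *: f i.

Lemma frame_scaleK i : frame_scale i * frame_scale i = (g i)^-1.
Proof. by rewrite /frame_scale -invfM -expr2 (sqr_sqrtr (ltW (frame_norm_gt0 i))). Qed.

Lemma normalized_frame_orthonormal : orthonormal_basis G normalized_frame.
Proof.
move=> i j; rewrite ipZl ipZr ip_frame.
have [<-|_] := eqVneq i j; last by rewrite mul0r !mulr0.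
by rewrite mul1r mulrA frame_scaleK mulVf // gt_eqF.
Qed.

Lemma ip_frame_coord (b : 'I_n -> R) j : ip G (\sum_k b k *: f k) (f j) = b j * g j.
Proof.
rewrite ip_suml (bigD1 j) //= big1 ?addr0 => [|k kj].
  by rewrite ipZl ip_frame eqxx mul1r.
by rewrite ipZl ip_frame (negbTE kj) mul0r mulr0.
Qed.

Lemma ip_lbr_frame i j k : ip G (lbr C (f i) (f j)) (f k) = beta i j k * g k.
Proof. by rewrite lbr_frame ip_frame_coord. Qed.

Lemma ip_frame_expansion (y : 'I_n -> R) :
  ip G (\sum_a y a *: f a) (\sum_a y a *: f a) = \sum_a g a * y a ^+ 2.
Proof.
rewrite ip_sumr; apply: eq_bigr => a _.
by rewrite ipZr ip_frame_coord mulrA -expr2 mulrC.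
Qed.

Lemma ip_frame_gt0 (y : 'I_n -> R) : \sum_a y a *: f a != 0 ->
  0 < ip G (\sum_a y a *: f a) (\sum_a y a *: f a).
Proof.
move=> nz; have /existsP[a ya] : [exists a, y a != 0].
  apply: contraNT nz; rewrite negb_exists => /forallP y0.
  by rewrite big1 // => a _; rewrite (eqP (negPn (y0 a))) scale0r.
rewrite ip_frame_expansion (bigD1 a) //=.
apply: ltr_pwDl; first by rewrite mulr_gt0 // exprn_even_gt0.
by apply: sumr_ge0 => i _; rewrite mulr_ge0 ?sqr_ge0 // ltW.
Qed.

Definition frame_ric a k : R :=
  - (1/2) * \sum_i \sum_j (g i * g j)^-1 * ((beta a i j * g j) * (beta k i j * g j))
  + (1/4) * \sum_i \sum_j (g i * g j)^-1 * ((beta i j a * g a) * (beta i j k * g k)).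

Lemma ric_form_normalized_frame a k :
  ric_form C G normalized_frame (f a) (f k) = frame_ric a k.
Proof.
rewrite /ric_form /frame_ric.
congr (_ * _ + _ * _); apply: eq_bigr => i _; apply: eq_bigr => j _;
  rewrite /normalized_frame ?(lbrZl, lbrZr, ipZl, ipZr) !ip_lbr_frame
    invfM -!frame_scaleK; ring.
Qed.

Lemma ricci_op_frame a :
  ricci_op C G normalized_frame (f a) = \sum_k (frame_ric a k / g k) *: f k.
Proof.
apply: eq_bigr => k _.
by rewrite ric_formZr scalerA -ric_form_normalized_frame -frame_scaleK; congr (_ *: _); ring.
Qed.

Lemma Einstein_nilradical_of_frame (c : R) (d : 'I_n -> R) (D : 'M[R]_n) :
  G^T = G ->
  (forall x, exists y : 'I_n -> R, x = \sum_a y a *: f a) ->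
  is_derivation C D ->
  (forall a, f a *m D = d a *: f a) ->
  (forall a k, frame_ric a k = (a == k)%:R * ((c + d a) * g a)) ->
  Einstein_nilradical C.
Proof.
move=> G_sym span derD fD ricE.
have ricci_f a : ricci_op C G normalized_frame (f a) = c *: f a + f a *m D.
  rewrite ricci_op_frame (bigD1 a) //= big1 ?addr0 => [|k ka]; last first.
    by rewrite ricE eq_sym (negbTE ka) !mul0r scale0r.
  by rewrite ricE eqxx mul1r mulfK ?gt_eqF // fD scalerDl.
exists G; split.
  by split=> // x x0; have [y xE] := span x; rewrite xE ip_frame_gt0 // -xE.
exists normalized_frame; split; first exact: normalized_frame_orthonormal.
exists c, D; split=> // x; have [y ->] := span x.
apply: (big_ind (fun v => ricci_op C G normalized_frame v = c *: v + v *m D)).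
- by rewrite ricci_op0 scaler0 mul0mx addr0.
- move=> u v hu hv /=; rewrite -[u]scale1r ricci_opDZ hu hv !scale1r.
  by rewrite scalerDr mulmxDl addrACA.
- move=> a _; rewrite -[_ *: f a]addr0 ricci_opDZ ricci_op0 !addr0 ricci_f.
  by rewrite scalerDr -scalemxAl !scalerA mulrC.
Qed.

End OrthogonalFrame.

Ltac case_ord7 i := case: i => [[|[|[|[|[|[|[|?]]]]]]] ?] //.

Lemma big_ord7 (V : nmodType) (F : 'I_7 -> V) : \sum_(i < 7) F i =
  F (@Ordinal 7 0 isT) + F (@Ordinal 7 1 isT) + F (@Ordinal 7 2 isT)
  + F (@Ordinal 7 3 isT) + F (@Ordinal 7 4 isT) + F (@Ordinal 7 5 isT)
  + F (@Ordinal 7 6 isT).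
Proof.
rewrite !big_ord_recr big_ord0 /= add0r.
by repeat congr (_ + _); congr F; apply: val_inj.
Qed.

Section Example.
Variable R : realType.

Definition G7_entry (i j : nat) : R :=
  match i, j with
  | 0, 0 => 3 | 1, 1 => 9
  | 2, 2 => 9/11 | 2, 3 => 6/11 | 3, 2 => 6/11 | 3, 3 => 15/11
  | 4, 4 => 3/11
  | 5, 5 => 76/121 | 5, 6 => -6/121 | 6, 5 => -6/121 | 6, 6 => 8/121
  | _, _ => 0 end.

Definition G7 : 'M[R]_7 := \matrix_(i, j) G7_entry i j.

Definition frame7 (i : 'I_7) : 'rV[R]_7 :=
  match nat_of_ord i with
  | 2 => e7 R 2 - (2/5) *: e7 R 3
  | 5 => e7 R 5 + (3/4) *: e7 R 6
  | k => e7 R k end.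

Definition frame7_norm (i : 'I_7) : R :=
  match nat_of_ord i with
  | 0 => 3 | 1 => 9 | 2 => 3/5 | 3 => 15/11 | 4 => 3/11 | 5 => 13/22
  | _ => 8/121 end.

Definition frame7_coord (x : 'rV[R]_7) (i : 'I_7) : R :=
  match nat_of_ord i with
  | 3 => x 0 i + 2/5 * x 0 (@Ordinal 7 2 isT)
  | 6 => x 0 i - 3/4 * x 0 (@Ordinal 7 5 isT)
  | _ => x 0 i end.

Definition frame7_struct (i j k : 'I_7) : R :=
  match nat_of_ord i, nat_of_ord j, nat_of_ord k with
  | 0, 1, 3 => 1 | 1, 0, 3 => -1
  | 0, 2, 4 => -(2/5) | 2, 0, 4 => 2/5
  | 0, 3, 4 => 1 | 3, 0, 4 => -1
  | 0, 4, 6 => 1 | 4, 0, 6 => -1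
  | 1, 2, 5 => 3/5 | 2, 1, 5 => -(3/5)
  | 1, 2, 6 => 11/20 | 2, 1, 6 => -(11/20)
  | 1, 3, 5 => 1 | 3, 1, 5 => -1
  | 1, 3, 6 => -(3/4) | 3, 1, 6 => 3/4
  | _, _, _ => 0 end.

Definition der7 (i : 'I_7) : R :=
  23/594 * match nat_of_ord i with 0 => 1 | 1 => 2 | 2 | 3 => 3 | 4 => 4 | _ => 5 end.

Definition D7 : 'M[R]_7 := diag_mx (\row_i der7 i).

Lemma G7_sym : G7^T = G7.
Proof. by apply/matrixP => i j; rewrite !mxE; case_ord7 i; case_ord7 j. Qed.

Lemma frame7_norm_gt0 i : 0 < frame7_norm i.
Proof. by case_ord7 i; rewrite /frame7_norm /=; lra. Qed.

Lemma ip_frame7 i j : ip G7 (frame7 i) (frame7 j) = (i == j)%:R * frame7_norm i.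
Proof.
case_ord7 i; case_ord7 j; rewrite /frame7 /frame7_norm /=.
all: rewrite ?(ipDl, ipDr, ipZl, ipZr, ipNl, ipNr) /e7 ?ip_delta ?mxE ?inordK //=.
all: by field.
Qed.

Lemma lbr_frame7 i j :
  lbr (@C7 R) (frame7 i) (frame7 j) = \sum_k frame7_struct i j k *: frame7 k.
Proof.
rewrite big_ord7; case_ord7 i; case_ord7 j; rewrite /frame7 /frame7_struct /=.
all: rewrite ?(lbrDl, lbrDr, lbrZl, lbrZr, lbrNl, lbrNr) /e7 ?lbr_delta /C7 ?inordK //=.
all: apply/rowP => m; rewrite !mxE; case_ord7 m; rewrite /= -?val_eqE /= ?inordK //=.
all: by field.
Qed.

Lemma frame7_span (x : 'rV[R]_7) : x = \sum_a frame7_coord x a *: frame7 a.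
Proof.
rewrite {1}(row_sum_delta x) !big_ord7 /frame7_coord /frame7 /=.
apply/rowP => m; rewrite !mxE; case_ord7 m; rewrite /= -?val_eqE /= ?inordK //=.
all: ring.
Qed.

Lemma C7_graded i j : @C7 R i j *m D7 = (der7 i + der7 j) *: @C7 R i j.
Proof.
apply/rowP => m; rewrite /D7 mul_mx_diag !mxE.
case_ord7 i; case_ord7 j; rewrite /C7 /der7 /=.
all: case_ord7 m; rewrite ?mxE /= -?val_eqE /= ?inordK //=.
all: ring.
Qed.

Lemma frame7_D7 a : frame7 a *m D7 = der7 a *: frame7 a.
Proof.
apply/rowP => m; rewrite /D7 mul_mx_diag !mxE.
case_ord7 a; case_ord7 m; rewrite /frame7 /der7 /= !mxE /= -?val_eqE /= ?inordK //=.
all: ring.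
Qed.

Lemma frame7_ric a k : frame_ric frame7_norm frame7_struct a k
  = (a == k)%:R * ((- (89/594) + der7 a) * frame7_norm a).
Proof.
rewrite /frame_ric !big_ord7.
case_ord7 a; case_ord7 k; rewrite -?val_eqE /=.
all: cbv beta iota delta [frame7_struct frame7_norm der7 nat_of_ord].
all: by field.
Qed.

End Example.

Theorem mainTheorem14 (R : realType) : Einstein_nilradical (@C7 R).
Proof.
apply: (Einstein_nilradical_of_frame (ip_frame7 R) (frame7_norm_gt0 R) (lbr_frame7 R)
  (G7_sym R) _ _ (frame7_D7 R) (frame7_ric R)).
- by move=> x; exists (frame7_coord x); exact: frame7_span.
- exact/diag_derivation/C7_graded.
Qed.
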